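(* Let $\mathcal A\in\mathbb C^{n_1\times n_2\times n_3}$. Then $$\mathcal A\{-,*\}\,(\mathcal A^\dagger)^*\,\mathcal A\{-,*\}\subseteq\mathcal A\{-,*\},$$ i.e. for all $\mathcal U,\mathcal V\in\mathcal A\{-,*\}$ one has $\mathcal U(\mathcal A^\dagger)^*\mathcal V\in\mathcal A\{-,*\}$.
   Context: Fix a nonsingular matrix $M\in\mathbb C^{n_3\times n_3}$. For $\mathcal C\in\mathbb C^{n_1\times n_2\times n_3}$ let $\widehat{\mathcal C}=\mathcal C\times_3M$, i.e. $\widehat{\mathcal C}_{ijk}=\sum_{l=1}^{n_3}M_{kl}\mathcal C_{ijl}$, and let $\widehat{\mathcal C}^{(i)}$ denote its $i$-th frontal slice. The M-product $\mathcal C\star_M\mathcal D$ of $\mathcal C\in\mathbb C^{n_1\times n_2\times n_3}$ and $\mathcal D\in\mathbb C^{n_2\times l\times n_3}$ is the unique tensor with $\widehat{\mathcal C\star_M\mathcal D}^{(i)}=\widehat{\mathcal C}^{(i)}\widehat{\mathcal D}^{(i)}$ for all $i\in[n_3]$. Juxtaposition of tensors denotes the M-product. The conjugate transpose $\mathcal A^*$ is defined by $\widehat{\mathcal A^*}^{(i)}=(\widehat{\mathcal A}^{(i)})^*$. The Moore–Penrose inverse $\mathcal A^\dagger$ is the unique $\mathcal W$ satisfying $\mathcal A\mathcal W\mathcal A=\mathcal A$, $\mathcal W\mathcal A\mathcal W=\mathcal W$, $(\mathcal A\mathcal W)^*=\mathcal A\mathcal W$, $(\mathcal W\mathcal A)^*=\mathcal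 W\mathcal A$. $\mathcal A\{1\}$ is the set of all $\mathcal W$ with $\mathcal A\mathcal W\mathcal A=\mathcal A$. The set of 1-Star inverses is $\mathcal A\{-,*\}=\{\mathcal A^-\mathcal A\mathcal A^*:\mathcal A^-\in\mathcal A\{1\}\}$. *)

(* Complex scalars: any numClosedFieldType C (e.g. complex R). *)
From HB Require Import structures.
From mathcomp Require Import all_boot all_order all_algebra.
Set Implicit Arguments. Unset Strict Implicit. Unset Printing Implicit Defensive.
Import Order.TTheory GRing.Theory Num.Theory.
Local Open Scope ring_scope.

Section Tensors.
Variable C : numClosedFieldType.

(* A third-order tensor in C^{n1 x n2 x n3}, given by its n3 frontal slices. *)
Definition tensor (n1 n2 n3 : nat) := {ffun 'I_n3 -> 'M[C]_(n1, n2)}.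

Definition conjtr (m n : nat) (X : 'M[C]_(m, n)) : 'M[C]_(n, m) :=
  (map_mx Num.conj X)^T.

Definition mode3 (n1 n2 n3 : nat) (M : 'M[C]_n3) (T : tensor n1 n2 n3)
  : tensor n1 n2 n3 := [ffun k => \sum_l M k l *: T l].

Definition mprod (n1 n2 l n3 : nat) (M : 'M[C]_n3)
  (T : tensor n1 n2 n3) (S : tensor n2 l n3) : tensor n1 l n3 :=
  mode3 (invmx M) [ffun k => mode3 M T k *m mode3 M S k].

Definition mctr (n1 n2 n3 : nat) (M : 'M[C]_n3) (T : tensor n1 n2 n3)
  : tensor n2 n1 n3 :=
  mode3 (invmx M) [ffun k => conjtr (mode3 M T k)].

Definition is_MP (n1 n2 n3 : nat) (M : 'M[C]_n3)
  (A : tensor n1 n2 n3) (W : tensor n2 n1 n3) : Prop :=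
  [/\ mprod M (mprod M A W) A = A,
      mprod M (mprod M W A) W = W,
      mctr M (mprod M A W) = mprod M A W &
      mctr M (mprod M W A) = mprod M W A].

Definition inner_inv (n1 n2 n3 : nat) (M : 'M[C]_n3)
  (A : tensor n1 n2 n3) (W : tensor n2 n1 n3) : Prop :=
  mprod M (mprod M A W) A = A.

Definition one_star (n1 n2 n3 : nat) (M : 'M[C]_n3)
  (A : tensor n1 n2 n3) (U : tensor n2 n1 n3) : Prop :=
  exists Am : tensor n2 n1 n3,
    inner_inv M A Am /\ U = mprod M (mprod M Am A) (mctr M A).

End Tensors.

(* Writing U = X A A^* and V = Y A A^* with X, Y in A{1}, the Penrose equation
   (A^+ A)^* = A^+ A gives A^* (A^+)^* = A^+ A, so that
   U (A^+)^* V = X A A^+ A Y A A^* = (X A Y) A A^*, and X A Y is again in A{1}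
   since A (X A Y) A = (A X A) Y A = A Y A = A. Everything is computed with the
   M-product, which is associative and reverses under conjugate transposition
   because, after the transform by M, it is the slice-wise matrix product. *)
From mathcomp Require Import all_boot all_order all_algebra.
Set Implicit Arguments. Unset Strict Implicit. Unset Printing Implicit Defensive.
Import GRing.Theory Num.Theory.
Local Open Scope ring_scope.

Section MProduct.
Variable C : numClosedFieldType.

Lemma conjtrM m n p (X : 'M[C]_(m, n)) (Y : 'M[C]_(n, p)) :
  conjtr (X *m Y) = conjtr Y *m conjtr X.
Proof. by rewrite /conjtr map_mxM trmx_mul. Qed.

Lemma mode3_comp n1 n2 n3 (M N : 'M[C]_n3) (T : tensor C n1 n2 n3) :
  mode3 M (mode3 N T) = mode3 (M *m N) T.
Proof.
apply/ffunP=> k; rewrite !ffunE.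
under eq_bigr do rewrite ffunE scaler_sumr.
rewrite exchange_big /=; apply: eq_bigr => l _.
by rewrite mxE scaler_suml; apply: eq_bigr => m _; rewrite scalerA.
Qed.

Lemma mode3_id n1 n2 n3 (T : tensor C n1 n2 n3) : mode3 1%:M T = T.
Proof.
apply/ffunP=> k; rewrite ffunE (bigD1 k) //= big1 ?addr0.
  by rewrite mxE eqxx scale1r.
by move=> i ik; rewrite mxE eq_sym (negbTE ik) scale0r.
Qed.

Variables (n3 : nat) (M : 'M[C]_n3).
Hypothesis M_unit : M \in unitmx.

Lemma mode3K n1 n2 : cancel (@mode3 C n1 n2 n3 M) (mode3 (invmx M)).
Proof. by move=> T; rewrite mode3_comp mulVmx // mode3_id. Qed.

Lemma mode3VK n1 n2 : cancel (@mode3 C n1 n2 n3 (invmx M)) (mode3 M).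
Proof. by move=> T; rewrite mode3_comp mulmxV // mode3_id. Qed.

Lemma mode3_mprod n1 n2 l (T : tensor C n1 n2 n3) (S : tensor C n2 l n3) k :
  mode3 M (mprod M T S) k = mode3 M T k *m mode3 M S k.
Proof. by rewrite /mprod mode3VK ffunE. Qed.

Lemma mode3_mctr n1 n2 (T : tensor C n1 n2 n3) k :
  mode3 M (mctr M T) k = conjtr (mode3 M T k).
Proof. by rewrite /mctr mode3VK ffunE. Qed.

Lemma eq_mode3 n1 n2 (T S : tensor C n1 n2 n3) :
  (forall k, mode3 M T k = mode3 M S k) -> T = S.
Proof. by move=> eqTS; apply: (can_inj (@mode3K n1 n2)); apply/ffunP. Qed.

Lemma mprodA n1 n2 n4 n5 (T : tensor C n1 n2 n3) (S : tensor C n2 n4 n3)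
    (R : tensor C n4 n5 n3) :
  mprod M (mprod M T S) R = mprod M T (mprod M S R).
Proof. by apply: eq_mode3 => k; rewrite !mode3_mprod mulmxA. Qed.

Lemma mctr_mprod n1 n2 l (T : tensor C n1 n2 n3) (S : tensor C n2 l n3) :
  mctr M (mprod M T S) = mprod M (mctr M S) (mctr M T).
Proof.
by apply: eq_mode3 => k; rewrite mode3_mctr !mode3_mprod !mode3_mctr conjtrM.
Qed.

Lemma inner_inv_mprod n1 n2 (A : tensor C n1 n2 n3) (X Y : tensor C n2 n1 n3) :
  inner_inv M A X -> inner_inv M A Y -> inner_inv M A (mprod M (mprod M X A) Y).
Proof. by rewrite /inner_inv => AXA AYA; rewrite -!mprodA AXA. Qed.

Lemma mprod_mctr_pinv n1 n2 (A : tensor C n1 n2 n3) (W : tensor C n2 n1 n3) :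
  mprod M (mprod M A W) A = A -> mctr M (mprod M W A) = mprod M W A ->
  mprod M (mprod M A (mctr M A)) (mctr M W) = A.
Proof. by move=> AWA WA_herm; rewrite mprodA -mctr_mprod WA_herm -mprodA. Qed.

End MProduct.

Theorem theorem3p15 (C : numClosedFieldType) (n1 n2 n3 : nat)
  (M : 'M[C]_n3) (A : tensor C n1 n2 n3) (Adag : tensor C n2 n1 n3) :
  M \in unitmx -> is_MP M A Adag ->
  forall U V : tensor C n2 n1 n3,
    one_star M A U -> one_star M A V ->
    one_star M A (mprod M (mprod M U (mctr M Adag)) V).
Proof.
move=> M_unit [AWA _ _ WA_herm] U V [X [AXA ->]] [Y [AYA ->]].
exists (mprod M (mprod M X A) Y); split; first exact: inner_inv_mprod.
(* Abstracting the common right factor keeps [rewrite] from unfolding [mprod]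
   while matching, which is very slow. *)
rewrite !(mprodA M_unit); apply: (congr1 (mprod M X)); move: (mprod M Y _) => R.
by rewrite -!(mprodA M_unit) mprod_mctr_pinv.
Qed.
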